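(* Let $\mathcal{V}$ be a non-trivial quantale and $\mathsf{F}\colon\mathbf{Set}\to\mathbf{Set}$ a functor. The monotone map $\widehat{\mathsf{F}}^{(-)}\colon\mathbf{Pred}(\mathsf{F})_{\mathsf{M}}\to\mathbf{Lax}(\mathsf{F})$, sending a class of monotone predicate liftings to its Kantorovich extension, is right adjoint to the monotone map $\mathsf{M}\mathsf{P}\mathsf{I}\colon\mathbf{Lax}(\mathsf{F})\to\mathbf{Pred}(\mathsf{F})_{\mathsf{M}}$, and the latter is order-reflecting.
   Context: A quantale $(\mathcal{V},\otimes,k)$ is a complete lattice with commutative monoid structure, each $u\otimes-$ preserving joins, $\hom(u,-)$ its right adjoint; non-trivial: $\bot\ne\top$. $\mathcal{V}$-categories $(X,a)$: $k\le a(x,x)$, $a(x,y)\otimes a(y,z)\le a(x,z)$; $\mathcal{V}$-functors: $a(x,y)\le b(f x,f y)$; category $\mathbf{Cat}(\mathcal{V})$. $\mathcal{V}$-relations $r\colon X\nrightarrow Y$ are maps $X\times Y\to\mathcal{V}$, composed by $(s\cdot r)(x,z)=\bigvee_y r(x,y)\otimes s(y,z)$, converse $r^\circ(y,x)=r(x,y)$, pointwise order, functions as relations with value $k$ on the graph and $\bot$ elsewhere; $(r\multimap s)(z,y)=\bigwedge_x\hom(s(x,z),r(x,y))$. A lax extension $\widehat{\mathsf{F}}$ of $\mathsf{F}$ maps $r\colon X\nrightarrow Y$ to $\widehat{\mathsf{F}}r\colon\mathsf{F}X\nrightarrow\mathsf{F}Y$ with (L1) monotonicity, (L2) $\widehat{\mathsf{F}}s\cdot\widehat{\mathsf{F}}r\le\widehat{\mathsf{F}}(s\cdot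 r)$, (L3) $\mathsf{F}f\le\widehat{\mathsf{F}}f$, $(\mathsf{F}f)^\circ\le\widehat{\mathsf{F}}(f^\circ)$; $\mathsf{I}(\widehat{\mathsf{F}})$ is the induced lifting $(X,a)\mapsto(\mathsf{F}X,\widehat{\mathsf{F}}a)$. $\mathbf{Lax}(\mathsf{F})$ is ordered pointwise. A $\kappa$-ary $\mathcal{V}$-valued predicate lifting is a natural transformation $\lambda\colon\mathbf{Set}(-,\mathcal{V}^\kappa)\to\mathbf{Set}(\mathsf{F}-,\mathcal{V})$, viewed (identifying $f\colon X\to\mathcal{V}^\kappa$ with the relation $(i,x)\mapsto f(x)(i)$, and maps $\mathsf{F}X\to\mathcal{V}$ with relations $1\nrightarrow\mathsf{F}X$) as maps from relations $\kappa\nrightarrow X$ to relations $1\nrightarrow\mathsf{F}X$; monotone if components are pointwise monotone. $\mathbf{Pred}(\mathsf{F})_{\mathsf{M}}$ is the conglomerate of classes of monotone predicate liftings ordered by reverse inclusion ($\Lambda\le\Lambda'$ iff $\Lambda\supseteq\Lambda'$). For a lifting $\overline{\mathsf{F}}$ (functor on $\mathbf{Cat}(\mathcal{V})$ with $|\overline{\mathsf{F}}-|=\mathsf{F}|-|$), $\mathsf{P}(\overline{\mathsf{F}})$ is the class of predicate liftings $\lambda$ such that $\lambda_{|X|}(f)\colon\overline{\mathsf{F}}X\to(\mathcal{V},\hom)$ is a $\mathcal{V}$-functor for every $\mathcal{V}$-functor $f\colon X\to\mathcal{V}^\kappa$ ($\mathcal{V}^\kappa$ with $[f,g]=\bigwedge_i\hom(f(i),g(i))$),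 and $\mathsf{M}$ selects the monotone members of a class. The Kantorovich extension of a class $\Lambda$ of monotone predicate liftings is $\widehat{\mathsf{F}}^\Lambda r=\bigwedge_{\lambda\in\Lambda}\bigwedge_{g\colon\kappa\nrightarrow X}\lambda(r\cdot g)\multimap\lambda(g)$. *)

Set Implicit Arguments.
Unset Strict Implicit.

Record quantale := Quantale {
  qcar :> Type;
  qle : qcar -> qcar -> Prop;
  qsup : (qcar -> Prop) -> qcar;
  qten : qcar -> qcar -> qcar;
  qk : qcar;
  qhom : qcar -> qcar -> qcar;
  qle_refl : forall u, qle u u;
  qle_trans : forall u v w, qle u v -> qle v w -> qle u w;
  qle_antisym : forall u v, qle u v -> qle v u -> u = v;
  qsup_ub : forall (S : qcar -> Prop) s, S s -> qle s (qsup S);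
  qsup_least : forall (S : qcar -> Prop) u,
      (forall s, S s -> qle s u) -> qle (qsup S) u;
  qten_assoc : forall u v w, qten u (qten v w) = qten (qten u v) w;
  qten_comm : forall u v, qten u v = qten v u;
  qten_unit : forall u, qten qk u = u;
  qten_sup : forall u (S : qcar -> Prop),
      qten u (qsup S) = qsup (fun w => exists s, S s /\ w = qten u s);
  qhom_adj : forall u v w, qle (qten u v) w <-> qle v (qhom u w)
}.

Arguments qle {q}.
Arguments qsup {q}.
Arguments qten {q}.
Arguments qk {q}.
Arguments qhom {q}.

Section QuantaleOps.
Variable V : quantale.

Definition qinf (S : V -> Prop) : V := qsup (fun x => forall s, S s -> qle x s).
Definition qbot : V := qsup (fun _ => False).
Definition qtop : V := qsup (fun _ => True).

End QuantaleOps.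

Arguments qinf {V}.
Arguments qbot {V}.
Arguments qtop {V}.

Definition nontrivial (V : quantale) : Prop := @qbot V <> @qtop V.

Section Relations.
Variable V : quantale.

Definition vrel (X Y : Type) := X -> Y -> V.

Definition rcomp {X Y Z : Type} (s : vrel Y Z) (r : vrel X Y) : vrel X Z :=
  fun x z => qsup (fun w => exists y, w = qten (r x y) (s y z)).

Definition rconv {X Y : Type} (r : vrel X Y) : vrel Y X := fun y x => r x y.

(* a function as a V-relation: k on its graph, bottom elsewhere *)
Definition rgraph {X Y : Type} (f : X -> Y) : vrel X Y :=
  fun x y => qsup (fun w => f x = y /\ w = qk).

Definition rle {X Y : Type} (r s : vrel X Y) : Prop :=
  forall x y, qle (r x y) (s x y).

Definition rlolli {X Y Z : Type} (r : vrel X Y) (s : vrel X Z) : vrel Z Y :=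
  fun z y => qinf (fun w => exists x, w = qhom (s x z) (r x y)).

Definition is_vcat {X : Type} (a : vrel X X) : Prop :=
  (forall x, qle qk (a x x)) /\
  (forall x y z, qle (qten (a x y) (a y z)) (a x z)).

Definition is_vfunctor {X Y : Type} (a : vrel X X) (b : vrel Y Y) (f : X -> Y) : Prop :=
  forall x y, qle (a x y) (b (f x) (f y)).

Definition vpow_hom (kappa : Type) : vrel (kappa -> V) (kappa -> V) :=
  fun f g => qinf (fun w => exists i, w = qhom (f i) (g i)).

End Relations.

Arguments vrel : clear implicits.
Arguments rcomp {V X Y Z}.
Arguments rconv {V X Y}.
Arguments rgraph {V X Y}.
Arguments rle {V X Y}.
Arguments rlolli {V X Y Z}.
Arguments is_vcat {V X}.
Arguments is_vfunctor {V X Y}.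

Record functor := Functor {
  fobj :> Type -> Type;
  fmap : forall (X Y : Type), (X -> Y) -> fobj X -> fobj Y;
  fmap_id : forall (X : Type) (x : fobj X), fmap (fun y : X => y) x = x;
  fmap_comp : forall (X Y Z : Type) (f : X -> Y) (g : Y -> Z) (x : fobj X),
      fmap (fun y => g (f y)) x = fmap g (fmap f x)
}.

Arguments fmap {f} {X Y} _ _ : rename.

Section LaxAndPred.
Variable V : quantale.
Variable F : functor.

Definition relop := forall X Y : Type, vrel V X Y -> vrel V (F X) (F Y).

Definition is_lax_ext (L : relop) : Prop :=
  (forall X Y (r r' : vrel V X Y), rle r r' -> rle (L X Y r) (L X Y r')) /\
  (forall X Y Z (r : vrel V X Y) (s : vrel V Y Z),
      rle (rcomp (L Y Z s) (L X Y r)) (L X Z (rcomp s r))) /\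
  (forall X Y (f : X -> Y),
      rle (rgraph (V:=V) (fmap (f:=F) f)) (L X Y (rgraph f)) /\
      rle (rconv (rgraph (V:=V) (fmap (f:=F) f))) (L Y X (rconv (rgraph f)))).

Definition lax_le (L1 L2 : relop) : Prop :=
  forall X Y (r : vrel V X Y), rle (L1 X Y r) (L2 X Y r).

(* a kappa-ary predicate lifting: natural transformation
   Set(-, V^kappa) -> Set(F-, V) *)
Record predlift := PredLift {
  pl_arity : Type;
  pl_comp : forall X : Type, (X -> pl_arity -> V) -> (F X -> V);
  pl_nat : forall (X Y : Type) (h : X -> Y) (f : Y -> pl_arity -> V) (z : F X),
      pl_comp (fun x => f (h x)) z = pl_comp f (fmap h z)
}.
Arguments pl_comp : clear implicits.
Arguments pl_comp p {X}.

Definition pl_monotone (l : predlift) : Prop :=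
  forall X (f g : X -> pl_arity l -> V),
    (forall x i, qle (f x i) (g x i)) ->
    forall z, qle (pl_comp l f z) (pl_comp l g z).

Definition pl_rel (l : predlift) (X : Type) (g : vrel V (pl_arity l) X)
  : vrel V unit (F X) :=
  fun _ z => pl_comp l (fun x i => g i x) z.

Definition plclass := predlift -> Prop.

Arguments pl_rel l {X}.

Definition monotone_class (L : plclass) : Prop :=
  forall l, L l -> pl_monotone l.

(* order of Pred(F)_M : reverse inclusion *)
Definition predM_le (L L' : plclass) : Prop := forall l, L' l -> L l.

(* object part of a lifting of F to Cat(V): the V-category structure
   on F|X| given one on |X| *)
Definition liftobj := forall X : Type, vrel V X X -> vrel V (F X) (F X).

Definition I_lift (L : relop) : liftobj := fun X a => L X X a.

Definition P_class (Fb : liftobj) : plclass := fun l =>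
  forall (X : Type) (a : vrel V X X), is_vcat a ->
    forall f : X -> (pl_arity l -> V),
      is_vfunctor a (@vpow_hom V (pl_arity l)) f ->
      is_vfunctor (Fb X a) (@qhom V) (pl_comp l f).

Definition M_class (L : plclass) : plclass := fun l => L l /\ pl_monotone l.

Definition MPI (L : relop) : plclass := M_class (P_class (I_lift L)).

Definition kantorovich (Lam : plclass) : relop := fun X Y r fx fy =>
  qinf (fun w => exists l, Lam l /\
     w = qinf (fun w' => exists g : vrel V (pl_arity l) X,
            w' = rlolli (pl_rel l (rcomp r g)) (pl_rel l g) fx fy)).

End LaxAndPred.

(* The Kantorovich extension K^Λ r is the largest relation along which every
   λ ∈ Λ is nonexpansive, λ(g)(ξ) ⊗ K^Λ r(ξ,ζ) ≤ λ(r·g)(ζ); this makes it a lax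
   extension, and L ≤ K^Λ says that every λ ∈ Λ is nonexpansive along each L r.
   For the adjunction, a relation r : X ⇸ Y is encoded as the V-category
   structure on X + Y given by its collage, on which g and r·g together form a
   V-functor into V^κ; applying λ ∈ MPI(L) to it and restricting along the
   coproduct injections gives nonexpansiveness along L r.  Conversely, every
   ξ ∈ Fκ yields the predicate lifting f ↦ L(f°)(ξ, -), which belongs to MPI(L);
   testing K^{MPI L} against these liftings with g the identity relation shows
   K^{MPI L} ≤ L, so by the adjunction MPI is order-reflecting. *)

From Stdlib Require Import Setoid.

Arguments qle_trans {q u v w} _ _.

Section QuantaleFacts.
Variable V : quantale.
Implicit Types u v w : V.

Lemma qten_le_r u v w : qle u v -> qle (qten w u) (qten w v).
Proof.
  intro Huv. apply qhom_adj. apply (qle_trans Huv). apply qhom_adj, qle_refl.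
Qed.

Lemma qten_le_l u v w : qle u v -> qle (qten u w) (qten v w).
Proof. intro Huv. rewrite (qten_comm u), (qten_comm v). now apply qten_le_r. Qed.

Lemma qten_k_r u : qten u qk = u.
Proof. rewrite qten_comm. apply qten_unit. Qed.

Lemma qten_qhom_le u v : qle (qten u (qhom u v)) v.
Proof. apply qhom_adj, qle_refl. Qed.

Lemma qhom_le u v w : qle qk u -> qle v w -> qle (qhom u v) w.
Proof.
  intros Hk Hvw. rewrite <- (qten_unit (qhom u v)).
  apply (qle_trans (qten_le_l _ _ _ Hk)), (qle_trans (qten_qhom_le u v)), Hvw.
Qed.

Lemma qten_qsup_r_least (S : V -> Prop) u w :
  (forall s, S s -> qle (qten u s) w) -> qle (qten u (qsup S)) w.
Proof. intro H. apply qhom_adj, qsup_least. intros s Hs. now apply qhom_adj, H. Qed.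

Lemma qten_qsup_l_least (S : V -> Prop) u w :
  (forall s, S s -> qle (qten s u) w) -> qle (qten (qsup S) u) w.
Proof.
  intro H. rewrite qten_comm. apply qten_qsup_r_least.
  intros s Hs. rewrite qten_comm. now apply H.
Qed.

Lemma qinf_lb (S : V -> Prop) s : S s -> qle (qinf S) s.
Proof. intro Hs. apply qsup_least. intros x Hx. now apply Hx. Qed.

Lemma qinf_glb (S : V -> Prop) u : (forall s, S s -> qle u s) -> qle u (qinf S).
Proof. intro H. now apply qsup_ub. Qed.

Lemma qten_bot_r u w : qle (qten u qbot) w.
Proof. apply qten_qsup_r_least. intros s []. Qed.

Lemma qten_bot_l u w : qle (qten qbot u) w.
Proof. apply qten_qsup_l_least. intros s []. Qed.

End QuantaleFacts.

Section RelationFacts.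
Variable V : quantale.

Lemma rgraph_k_le X Y (f : X -> Y) x : qle qk (@rgraph V X Y f x (f x)).
Proof. apply qsup_ub. now split. Qed.

Lemma rgraph_le X Y (f : X -> Y) x y (c : V) :
  (f x = y -> qle qk c) -> qle (rgraph f x y) c.
Proof. intro H. apply qsup_least. intros s [Hxy ->]. now apply H. Qed.

Lemma rgraph_id_ten_l X (x x' : X) (t : X -> V) :
  qle (qten (rgraph (fun u => u) x x') (t x')) (t x).
Proof.
  apply qten_qsup_l_least. intros s [<- ->]. rewrite qten_unit. apply qle_refl.
Qed.

Lemma rgraph_id_ten_r X (x x' : X) (t : X -> V) :
  qle (qten (t x) (rgraph (fun u => u) x x')) (t x').
Proof.
  apply qten_qsup_r_least. intros s [<- ->]. rewrite qten_k_r. apply qle_refl.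
Qed.

Lemma rcomp_ub X Y Z (r : vrel V X Y) (s : vrel V Y Z) x y z :
  qle (qten (r x y) (s y z)) (rcomp s r x z).
Proof. apply qsup_ub. now exists y. Qed.

Lemma rcomp_least X Y Z (r : vrel V X Y) (s : vrel V Y Z) x z c :
  (forall y, qle (qten (r x y) (s y z)) c) -> qle (rcomp s r x z) c.
Proof. intro H. apply qsup_least. intros w [y ->]. apply H. Qed.

Lemma qten_rcomp_least X Y Z (r : vrel V X Y) (s : vrel V Y Z) x z t c :
  (forall y, qle (qten t (qten (r x y) (s y z))) c) -> qle (qten t (rcomp s r x z)) c.
Proof. intro H. apply qten_qsup_r_least. intros w [y ->]. apply H. Qed.

Lemma rcomp_ten_least X Y Z (r : vrel V X Y) (s : vrel V Y Z) x z t c :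
  (forall y, qle (qten (qten (r x y) (s y z)) t) c) -> qle (qten (rcomp s r x z) t) c.
Proof. intro H. apply qten_qsup_l_least. intros w [y ->]. apply H. Qed.

Lemma rcomp_le_l X Y Z (r : vrel V X Y) (s s' : vrel V Y Z) :
  rle s s' -> rle (rcomp s r) (rcomp s' r).
Proof.
  intros Hs x z. apply rcomp_least. intro y.
  apply (qle_trans (qten_le_r _ _ _ _ (Hs y z))), rcomp_ub.
Qed.

Lemma rcomp_assoc_le X Y Z W (g : vrel V X Y) (r : vrel V Y Z) (s : vrel V Z W) :
  rle (rcomp s (rcomp r g)) (rcomp (rcomp s r) g).
Proof.
  intros i z. apply rcomp_least. intro y. apply rcomp_ten_least. intro x.
  rewrite <- qten_assoc.
  apply (qle_trans (qten_le_r _ _ _ _ (rcomp_ub _ _ _ r s x y z))), rcomp_ub.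
Qed.

Lemma rcomp_id_r_le X Y (r : vrel V X Y) : rle (rcomp r (rgraph (fun x => x))) r.
Proof.
  intros x y. apply rcomp_least. intro x'. apply (rgraph_id_ten_l _ x x' (fun u => r u y)).
Qed.

Lemma rcomp_rgraph_ge K X Y (g : vrel V K X) (f : X -> Y) i x :
  qle (g i x) (rcomp (rgraph f) g i (f x)).
Proof.
  rewrite <- (qten_k_r _ (g i x)) at 1.
  apply (qle_trans (qten_le_r _ _ _ _ (rgraph_k_le _ _ f x))), rcomp_ub.
Qed.

Lemma rcomp_rconv_rgraph_ge K X Y (g : vrel V K Y) (f : X -> Y) i x :
  qle (g i (f x)) (rcomp (rconv (rgraph f)) g i x).
Proof.
  rewrite <- (qten_k_r _ (g i (f x))) at 1.
  apply (qle_trans (qten_le_r _ _ _ _ (rgraph_k_le _ _ f x))).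
  apply (rcomp_ub _ _ _ g (rconv (rgraph f)) i (f x) x).
Qed.

Lemma vfunctor_vpow_iff K X (a : vrel V X X) (f : X -> K -> V) :
  is_vfunctor a (@vpow_hom V K) f <->
  (forall i x y, qle (qten (f x i) (a x y)) (f y i)).
Proof.
  split.
  - intros Hf i x y. apply qhom_adj. apply (qle_trans (Hf x y)).
    apply qinf_lb. now exists i.
  - intros H x y. apply qinf_glb. intros s [i ->]. now apply qhom_adj.
Qed.

Lemma vfunctor_rcomp_le K X (a : vrel V X X) (f : X -> K -> V) :
  is_vfunctor a (@vpow_hom V K) f -> rle (rcomp a (fun i x => f x i)) (fun i x => f x i).
Proof. intros Hf i y. apply rcomp_least. intro x. now apply vfunctor_vpow_iff. Qed.

Definition collage {X Y} (r : vrel V X Y) : vrel V (X + Y) (X + Y) := fun u v =>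
  match u, v with
  | inl x, inl x' => rgraph (fun t => t) x x'
  | inl x, inr y => r x y
  | inr _, inl _ => qbot
  | inr y, inr y' => rgraph (fun t => t) y y'
  end.

Definition collage_fun {K X Y} (g : vrel V K X) (r : vrel V X Y) : X + Y -> K -> V :=
  fun u => match u with
  | inl x => fun i => g i x
  | inr y => fun i => rcomp r g i y
  end.

Lemma collage_vcat X Y (r : vrel V X Y) : is_vcat (collage r).
Proof.
  split.
  - intros [x | y]; apply rgraph_k_le.
  - intros [x | y] [x' | y'] [x'' | y'']; simpl.
    + apply (rgraph_id_ten_l _ x x' (fun u => rgraph (fun t => t) u x'')).
    + apply (rgraph_id_ten_l _ x x' (fun u => r u y'')).
    + apply qten_bot_r.
    + apply (rgraph_id_ten_r _ y' y'' (fun u => r x u)).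
    + apply qten_bot_l.
    + apply qten_bot_l.
    + apply qten_bot_r.
    + apply (rgraph_id_ten_l _ y y' (fun u => rgraph (fun t => t) u y'')).
Qed.

Lemma collage_fun_vfunctor K X Y (g : vrel V K X) (r : vrel V X Y) :
  is_vfunctor (collage r) (@vpow_hom V K) (collage_fun g r).
Proof.
  apply vfunctor_vpow_iff. intros i [x | y] [x' | y']; simpl.
  - apply (rgraph_id_ten_r _ x x' (fun u => g i u)).
  - apply rcomp_ub.
  - apply qten_bot_r.
  - apply (rgraph_id_ten_r _ y y' (fun u => rcomp r g i u)).
Qed.

End RelationFacts.

Arguments collage {V X Y} r.
Arguments collage_fun {V K X Y} g r.

Section Kantorovich.
Variables (V : quantale) (F : functor).
Implicit Types (Lam : plclass V F) (l : predlift V F).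

Definition pl_app l {X} (g : vrel V (pl_arity l) X) (z : F X) : V := pl_rel g tt z.

Lemma pl_app_fmap l X Y (h : X -> Y) (g : vrel V (pl_arity l) Y) (z : F X) :
  pl_app l (fun i x => g i (h x)) z = pl_app l g (fmap h z).
Proof. exact (pl_nat h (fun y i => g i y) z). Qed.

Lemma pl_app_le l X (g g' : vrel V (pl_arity l) X) z :
  pl_monotone l -> rle g g' -> qle (pl_app l g z) (pl_app l g' z).
Proof. intros Hl Hg. apply Hl. intros x i. apply Hg. Qed.

Lemma kantorovich_le_qhom {Lam X Y} (r : vrel V X Y) fx fy {l} g : Lam l ->
  qle (kantorovich Lam r fx fy) (qhom (pl_app l g fx) (pl_app l (rcomp r g) fy)).
Proof.
  intro Hl.
  eapply qle_trans; [apply qinf_lb; exists l; split; [exact Hl | reflexivity] |].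
  eapply qle_trans; [apply qinf_lb; exists g; reflexivity |].
  apply qinf_lb. now exists tt.
Qed.

Lemma kantorovich_nonexpansive {Lam X Y} (r : vrel V X Y) fx fy {l} g : Lam l ->
  qle (qten (pl_app l g fx) (kantorovich Lam r fx fy)) (pl_app l (rcomp r g) fy).
Proof.
  intro Hl. apply (qle_trans (qten_le_r _ _ _ _ (kantorovich_le_qhom r fx fy g Hl))).
  apply qten_qhom_le.
Qed.

Lemma le_kantorovich Lam X Y (r : vrel V X Y) fx fy u :
  (forall l g, Lam l -> qle (qten (pl_app l g fx) u) (pl_app l (rcomp r g) fy)) ->
  qle u (kantorovich Lam r fx fy).
Proof.
  intro H. apply qinf_glb. intros s [l [Hl ->]]. apply qinf_glb. intros s [g ->].
  apply qinf_glb. intros s [[] ->]. now apply qhom_adj, H.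
Qed.

Section MonotoneClass.
Variables (Lam : plclass V F) (HLam : monotone_class Lam).

Lemma kantorovich_le X Y (r r' : vrel V X Y) :
  rle r r' -> rle (kantorovich Lam r) (kantorovich Lam r').
Proof.
  intros Hr fx fy. apply le_kantorovich. intros l g Hl.
  apply (qle_trans (kantorovich_nonexpansive r fx fy g Hl)).
  apply pl_app_le; [now apply HLam | now apply rcomp_le_l].
Qed.

Lemma kantorovich_rcomp X Y Z (r : vrel V X Y) (s : vrel V Y Z) :
  rle (rcomp (kantorovich Lam s) (kantorovich Lam r)) (kantorovich Lam (rcomp s r)).
Proof.
  intros fx fz. apply le_kantorovich. intros l g Hl. apply qten_rcomp_least. intro fy.
  rewrite qten_assoc.
  apply (qle_trans (qten_le_l _ _ _ _ (kantorovich_nonexpansive r fx fy g Hl))).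
  apply (qle_trans (kantorovich_nonexpansive s fy fz (rcomp r g) Hl)).
  apply pl_app_le; [now apply HLam | apply rcomp_assoc_le].
Qed.

Lemma kantorovich_rgraph X Y (f : X -> Y) :
  rle (rgraph (fmap f)) (kantorovich Lam (rgraph f)).
Proof.
  intros z w. apply rgraph_le. intros <-. apply le_kantorovich. intros l g Hl.
  rewrite qten_k_r, <- pl_app_fmap.
  apply pl_app_le; [now apply HLam |]. intros i x. apply rcomp_rgraph_ge.
Qed.

Lemma kantorovich_rconv_rgraph X Y (f : X -> Y) :
  rle (rconv (rgraph (fmap f))) (kantorovich Lam (rconv (rgraph f))).
Proof.
  intros w z. apply rgraph_le. intros <-. apply le_kantorovich. intros l g Hl.
  rewrite qten_k_r, <- pl_app_fmap.
  apply pl_app_le; [now apply HLam |]. intros i x. apply rcomp_rconv_rgraph_ge.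
Qed.

Lemma kantorovich_lax_ext : is_lax_ext (kantorovich Lam).
Proof.
  split; [| split].
  - exact kantorovich_le.
  - exact kantorovich_rcomp.
  - split; [apply kantorovich_rgraph | apply kantorovich_rconv_rgraph].
Qed.

Lemma MPI_le_of_le_kantorovich (L : relop V F) :
  lax_le L (kantorovich Lam) -> predM_le (MPI L) Lam.
Proof.
  intros HL l Hl. split; [| now apply HLam].
  intros X a Ha f Hf x y. apply qhom_adj.
  apply (qle_trans (qten_le_r _ _ _ _ (HL X X a x y))).
  apply (qle_trans (kantorovich_nonexpansive a x y (fun i x => f x i) Hl)).
  apply pl_app_le; [now apply HLam | now apply vfunctor_rcomp_le].
Qed.

End MonotoneClass.

Lemma kantorovich_antitone Lam Lam' :
  predM_le Lam Lam' -> lax_le (kantorovich Lam) (kantorovich Lam').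
Proof.
  intros H X Y r fx fy. apply le_kantorovich. intros l g Hl.
  apply kantorovich_nonexpansive, H, Hl.
Qed.

Lemma MPI_monotone (L1 L2 : relop V F) : lax_le L1 L2 -> predM_le (MPI L1) (MPI L2).
Proof.
  intros H l [HP Hl]. split; [| exact Hl].
  intros X a Ha f Hf x y. apply (qle_trans (H X X a x y)). now apply HP.
Qed.

Section LaxExtension.
Variables (L : relop V F) (HL : is_lax_ext L).

Lemma lax_ext_le X Y (r r' : vrel V X Y) : rle r r' -> rle (L X Y r) (L X Y r').
Proof. apply HL. Qed.

Lemma lax_ext_rcomp {X Y Z} (r : vrel V X Y) (s : vrel V Y Z) :
  rle (rcomp (L Y Z s) (L X Y r)) (L X Z (rcomp s r)).
Proof. apply HL. Qed.

Lemma lax_ext_rcomp_ge_l {X Y Z} (r : vrel V X Y) (s : vrel V Y Z) z y w :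
  qle qk (L Y Z s y w) -> qle (L X Y r z y) (L X Z (rcomp s r) z w).
Proof.
  intro Hk. rewrite <- (qten_k_r _ (L X Y r z y)). apply (qle_trans (qten_le_r _ _ _ _ Hk)).
  apply (qle_trans (rcomp_ub _ _ _ _ _ _ _ _ _)), lax_ext_rcomp.
Qed.

Lemma lax_ext_rcomp_ge_r {X Y Z} (r : vrel V X Y) (s : vrel V Y Z) z y w :
  qle qk (L X Y r z y) -> qle (L Y Z s y w) (L X Z (rcomp s r) z w).
Proof.
  intro Hk. rewrite <- (qten_unit (L Y Z s y w)). apply (qle_trans (qten_le_l _ _ _ _ Hk)).
  apply (qle_trans (rcomp_ub _ _ _ _ _ _ _ _ _)), lax_ext_rcomp.
Qed.

Lemma lax_ext_rgraph_k_le {X Y} (h : X -> Y) z : qle qk (L X Y (rgraph h) z (fmap h z)).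
Proof. apply (qle_trans (rgraph_k_le _ _ _ (fmap h) z)). apply HL. Qed.

Lemma lax_ext_rconv_rgraph_k_le {X Y} (h : X -> Y) z :
  qle qk (L Y X (rconv (rgraph h)) (fmap h z) z).
Proof. apply (qle_trans (rgraph_k_le _ _ _ (fmap h) z)). apply HL. Qed.

Lemma lax_ext_le_square {X Y Z} (r : vrel V X Y) (h1 : X -> Z) (h2 : Y -> Z)
    (a : vrel V Z Z) :
  (forall x y, qle (r x y) (a (h1 x) (h2 y))) ->
  forall z w, qle (L X Y r z w) (L Z Z a (fmap h1 z) (fmap h2 w)).
Proof.
  intros Ha z w.
  assert (Hsq : rle (rcomp (rgraph h2) (rcomp r (rconv (rgraph h1)))) a).
  { intros u v. apply rcomp_least. intro y. apply rcomp_ten_least. intro x.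
    apply qten_qsup_r_least. intros s [<- ->]. rewrite qten_k_r.
    apply qten_qsup_l_least. intros s [<- ->]. rewrite qten_unit. apply Ha. }
  apply (qle_trans (lax_ext_rcomp_ge_r (rconv (rgraph h1)) r (fmap h1 z) z w
                     (lax_ext_rconv_rgraph_k_le h1 z))).
  apply (qle_trans (lax_ext_rcomp_ge_l _ (rgraph h2) _ w (fmap h2 w)
                     (lax_ext_rgraph_k_le h2 w))).
  now apply lax_ext_le.
Qed.

Lemma le_kantorovich_of_MPI_le Lam : predM_le (MPI L) Lam -> lax_le L (kantorovich Lam).
Proof.
  intros H X Y r z w. apply le_kantorovich. intros l g Hl. destruct (H l Hl) as [HP _].
  change (pl_app l g z) with (pl_comp (p:=l) (fun x => collage_fun g r (inl x)) z).
  change (pl_app l (rcomp r g) w) with (pl_comp (p:=l) (fun y => collage_fun g r (inr y)) w).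
  rewrite (pl_nat inl (collage_fun g r) z), (pl_nat inr (collage_fun g r) w).
  apply qhom_adj.
  apply (qle_trans (lax_ext_le_square r inl inr (collage r) (fun x y => qle_refl _) z w)).
  apply HP; [apply collage_vcat | apply collage_fun_vfunctor].
Qed.

Lemma lax_ext_fmap {K X Y} (h : X -> Y) (f : Y -> K -> V) (xi : F K) (z : F X) :
  L K X (fun i x => f (h x) i) xi z = L K Y (fun i y => f y i) xi (fmap h z).
Proof.
  apply qle_antisym.
  - apply (qle_trans (lax_ext_rcomp_ge_l _ (rgraph h) _ z _ (lax_ext_rgraph_k_le h z))).
    apply lax_ext_le. intros i y. apply rcomp_least. intro x.
    apply qten_qsup_r_least. intros s [<- ->]. rewrite qten_k_r. apply qle_refl.
  - apply (qle_trans (lax_ext_rcomp_ge_l _ (rconv (rgraph h)) _ _ z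
                       (lax_ext_rconv_rgraph_k_le h z))).
    apply lax_ext_le. intros i x. apply rcomp_least. intro y.
    apply qten_qsup_r_least. intros s [<- ->]. rewrite qten_k_r. apply qle_refl.
Qed.

Definition lax_ext_predlift {K} (xi : F K) : predlift V F :=
  @PredLift V F K (fun Y f z => L K Y (fun i y => f y i) xi z)
    (fun X Y h f z => lax_ext_fmap h f xi z).

Lemma lax_ext_predlift_MPI {K} (xi : F K) : MPI L (lax_ext_predlift xi).
Proof.
  split.
  - intros Z a Ha f Hf y y'. simpl. apply qhom_adj.
    apply (qle_trans (rcomp_ub _ _ _ _ _ _ _ _ _)), (qle_trans (lax_ext_rcomp _ _ _ _)).
    now apply lax_ext_le, vfunctor_rcomp_le.
  - intros Y f g Hfg z. apply lax_ext_le. intros i y. apply Hfg.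
Qed.

Lemma kantorovich_MPI_le : lax_le (kantorovich (MPI L)) L.
Proof.
  intros X Y r z w.
  apply (qle_trans (kantorovich_le_qhom r z w (l := lax_ext_predlift z) (rgraph (fun x => x))
                      (lax_ext_predlift_MPI z))).
  apply qhom_le; simpl.
  - rewrite <- (fmap_id z) at 2. apply lax_ext_rgraph_k_le.
  - apply lax_ext_le, rcomp_id_r_le.
Qed.

End LaxExtension.

Lemma MPI_order_reflecting (L1 L2 : relop V F) : is_lax_ext L1 -> is_lax_ext L2 ->
  predM_le (MPI L1) (MPI L2) -> lax_le L1 L2.
Proof.
  intros H1 H2 H X Y r z w.
  apply (qle_trans (le_kantorovich_of_MPI_le L1 H1 _ H X Y r z w)).
  now apply kantorovich_MPI_le.
Qed.

End Kantorovich.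

Theorem corollary3 (V : quantale) (HV : nontrivial V) (F : functor) :
  (* the Kantorovich extension of a class of monotone liftings is a lax extension *)
  (forall Lam : plclass V F, monotone_class Lam -> is_lax_ext (kantorovich Lam))
  (* Fhat^(-) : Pred(F)_M -> Lax(F) is monotone *)
  /\ (forall Lam Lam' : plclass V F, monotone_class Lam -> monotone_class Lam' ->
        predM_le Lam Lam' -> lax_le (kantorovich Lam) (kantorovich Lam'))
  (* MPI : Lax(F) -> Pred(F)_M is monotone *)
  /\ (forall L1 L2 : relop V F, is_lax_ext L1 -> is_lax_ext L2 ->
        lax_le L1 L2 -> predM_le (MPI L1) (MPI L2))
  (* MPI -| Fhat^(-) *)
  /\ (forall (L : relop V F) (Lam : plclass V F), is_lax_ext L -> monotone_class Lam ->
        (predM_le (MPI L) Lam <-> lax_le L (kantorovich Lam)))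
  (* MPI is order-reflecting *)
  /\ (forall L1 L2 : relop V F, is_lax_ext L1 -> is_lax_ext L2 ->
        predM_le (MPI L1) (MPI L2) -> lax_le L1 L2).
Proof.
  split; [| split; [| split; [| split]]].
  - exact (kantorovich_lax_ext V F).
  - intros Lam Lam' _ _. apply kantorovich_antitone.
  - intros L1 L2 _ _. apply MPI_monotone.
  - intros L Lam HL HLam. split.
    + now apply le_kantorovich_of_MPI_le.
    + now apply MPI_le_of_le_kantorovich.
  - exact (MPI_order_reflecting V F).
Qed.
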